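(* Let $N\in\mathbb{N}$, $d\in\mathbb{N}$, and let $b_1,\dots,b_d\in\{\lceil N^{1/2}/\sqrt{2}\rceil,\dots,\lfloor N^{1/2}\rfloor\}$ be coprime to $N$ with $b_{i+1}=b_i+1$ for $1\le i<d$. Set $D:=b_1+\lfloor N/b_d\rfloor$. For each $i$ write the $b_i$-adic digit polynomial of $N$ as $P_{b_i}=n_{2,i}X^2+n_{1,i}X+n_{0,i}$ (i.e. $n_{k,i}$ is the coefficient of $X^k$ in $P_{b_i}$). Suppose $\gcd(D+z,N)=1$ for every $z\in\{0,\dots,2d-2\}$ and $n_{1,i}\le n_{0,i}+1$ for every $i$. Then $\gcd(n_{2,i}b_i,N)=1$ for every $i$, and, defining $b_{d+i}:=n_{0,i}\cdot n_{2,i}^{-1}\cdot b_i^{-1}\bmod N$ for $1\le i\le d$, we have $\gcd(b_j-b_k,N)=1$ for all $j,k\in\{1,\dots,2d\}$ with $j\neq k$.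
   Context: For an integer $b\ge 2$, if $N=\sum_{i\ge0}n_ib^i$ is the unique base-$b$ representation of $N$ with digits $n_i\in\{0,\dots,b-1\}$, the $b$-adic digit polynomial of $N$ is $P_b:=\sum_{i\ge0}n_iX^i\in\mathbb{Z}[X]$. *)

From mathcomp Require Import all_boot all_algebra.
Set Implicit Arguments. Unset Strict Implicit. Unset Printing Implicit Defensive.
Import GRing.Theory Num.Theory.
Local Open Scope ring_scope.

(* b-adic digit polynomial of N (for b >= 2): sum_i n_i X^i where
   n_i = (N %/ b^i) %% b is the i-th base-b digit of N.  N.+1 terms
   suffice since b^N > N for b >= 2 (higher digits vanish anyway). *)
Definition digit_poly (b N : nat) : {poly nat} :=
  \poly_(i < N.+1) ((N %/ b ^ i) %% b)%N.

Definition invmodn (a N : nat) : nat := ((egcdn a N).1 %% N)%N.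

Lemma invmodnP a N : (0 < a)%N -> coprime a N ->
  (a * invmodn a N = 1 %[mod N])%N.
Proof.
move=> a0 co; rewrite /invmodn modnMmr.
case: egcdnP => // km kn /= def _.
move: co; rewrite /coprime => /eqP g1.
by rewrite mulnC def g1 modnMDl.
Qed.

From mathcomp Require Import all_boot all_algebra.
From mathcomp Require Import zify.
Import GRing.Theory Num.Theory.

Set Implicit Arguments.
Unset Strict Implicit.
Unset Printing Implicit Defensive.

(* Since N/2 < b_i^2 <= N, the b_i-adic digits of N are n_2 = 1,
   n_1 = N/b_i - b_i and n_0 = N mod b_i (with / the floor quotient), and
   n_1 <= n_0 + 1 forces N/b_(i+1) = N/b_i - 1, so N/b_i + i is constant.
   Since N = (N/b_i) b_i + n_0, we get b_(d+i) = n_0 b_i^-1 = - N/b_i (mod N).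
   Hence a difference b_j - b_k is congruent either to j - k, with
   0 < |j - k| < d, or to +-(D + z) with z <= 2d - 2.  The former is coprime
   to N because each of its prime factors p < d divides one of the d
   consecutive integers b_1, ..., b_d, which are coprime to N. *)

Lemma coef_digit_poly b N k : (1 < b)%N ->
  ((digit_poly b N)`_k)%R = ((N %/ b ^ k) %% b)%N.
Proof.
move=> b_gt1; rewrite coef_poly ltnS; case: (leqP k N) => [_ //|N_lt_k].
by rewrite divn_small ?mod0n // (ltn_trans N_lt_k (ltn_expl k b_gt1)).
Qed.

Lemma divn_sqr_bounds b N : (0 < b)%N -> (b ^ 2 <= N < 2 * b ^ 2)%N ->
  (b <= N %/ b < 2 * b)%N.
Proof.
move=> b_gt0 /andP[sqr_le lt_sqr].
by rewrite leq_divRL // ltn_divLR // -mulnA mulnn sqr_le.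
Qed.

Lemma coef1_digit_poly_sqr b N : (1 < b)%N -> (b ^ 2 <= N < 2 * b ^ 2)%N ->
  ((digit_poly b N)`_1)%R = (N %/ b - b)%N.
Proof.
move=> b_gt1 bounds.
have /andP[le_q lt_q] := divn_sqr_bounds (ltnW b_gt1) bounds.
rewrite coef_digit_poly // expn1 -{1}(subnK le_q) modnDr modn_small //.
by rewrite ltn_subLR // addnn -mul2n.
Qed.

Lemma coef2_digit_poly_sqr b N : (1 < b)%N -> (b ^ 2 <= N < 2 * b ^ 2)%N ->
  ((digit_poly b N)`_2)%R = 1%N.
Proof.
move=> b_gt1 /andP[sqr_le lt_sqr].
have sqr_gt0 : (0 < b ^ 2)%N by rewrite expn_gt0 (ltnW b_gt1).
rewrite coef_digit_poly // [X in (X %% b)%N](_ : _ = 1%N) ?modn_small //.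
by apply/eqP; rewrite eqn_leq -ltnS ltn_divLR // leq_divRL // mul1n lt_sqr.
Qed.

Lemma divnS_of_digit_le b N : (0 < b)%N -> (b <= N %/ b)%N ->
  (N %/ b - b <= N %% b + 1)%N -> N %/ b.+1 = (N %/ b).-1.
Proof.
move=> b_gt0 le_q digit_le; have lt_r := ltn_mod N b.
rewrite {1}(divn_eq N b).
move: (N %/ b) (N %% b) le_q digit_le lt_r => q r le_q digit_le lt_r.
rewrite (_ : q * b + r = q.-1 * b.+1 + (r + b + 1 - q))%N; last first.
  by case: q le_q digit_le => [|q] /=; [lia | rewrite !mulSn; lia].
rewrite divnMDl // divn_small //; lia.
Qed.

Lemma coprime_of_coprime_run a d N :
  (forall i, (i < d)%N -> coprime (a + i) N) ->
  forall m, (0 < m < d)%N -> coprime m N.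
Proof.
move=> run_cop m /andP[m_gt0 lt_md]; set g := gcdn m N.
have g_gt0 : (0 < g)%N by rewrite gcdn_gt0 m_gt0.
have le_gm : (g <= m)%N by rewrite dvdn_leq // dvdn_gcdl.
set i := ((g - a %% g) %% g)%N.
have lt_id : (i < d)%N.
  exact: leq_trans (ltn_pmod _ g_gt0) (leq_trans le_gm (ltnW lt_md)).
have dvd_g_ai : (g %| a + i)%N.
  rewrite /dvdn modnDmr {1}(divn_eq a g) -addnA subnKC.
    by rewrite -mulSnr modnMl.
  exact/ltnW/(ltn_pmod a g_gt0).
have : (g %| gcdn (a + i) N)%N by rewrite dvdn_gcd dvd_g_ai dvdn_gcdr.
by rewrite (eqP (run_cop i lt_id)) dvdn1.
Qed.

Lemma dvdn_modn_mul_invmodn_add_divn b N : (0 < b)%N -> coprime b N ->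
  (N %| N %% b * invmodn b N + N %/ b)%N.
Proof.
move=> b_gt0 cop_bN; have cop_Nb : coprime N b by rewrite coprime_sym.
rewrite -(Gauss_dvdr _ cop_Nb) /dvdn mulnDr mulnCA -modnDml -modnMmr.
rewrite (invmodnP b_gt0 cop_bN) modnMmr muln1 modnDml mulnC addnC -divn_eq.
by rewrite modnn.
Qed.

Lemma modn_mul_invmodn1 x N : (x * invmodn 1 N = x %[mod N])%N.
Proof.
by rewrite -modnMmr -[invmodn 1 N]mul1n (invmodnP (ltn0Sn 0) (coprime1n N)) modnMmr muln1.
Qed.

Lemma coprimez_eq_mod (x y n : int) :
  (x = y %[mod n])%Z -> coprimez x n = coprimez y n.
Proof. by move=> eq_xy; rewrite /coprimez -gcdz_modl eq_xy gcdz_modl. Qed.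

Section ConsecutiveBases.

Variables (N d : nat) (b : nat -> nat).
Hypothesis b_gt1 : forall i, (1 <= i <= d)%N -> (1 < b i)%N.
Hypothesis b_sqr_bounds :
  forall i, (1 <= i <= d)%N -> (N <= 2 * b i ^ 2)%N /\ (b i ^ 2 <= N)%N.
Hypothesis b_coprime : forall i, (1 <= i <= d)%N -> coprime (b i) N.
Hypothesis b_succ : forall i, (1 <= i < d)%N -> b i.+1 = (b i).+1.

Lemma b_affine i : (1 <= i <= d)%N -> b i = (b 1 + i.-1)%N.
Proof.
elim: i => [//|[|i] IH] /andP[_ le_id]; first by rewrite addn0.
by rewrite b_succ ?IH ?addnS //; apply/andP; split=> //; apply: ltnW.
Qed.

Lemma coprime_lt_length m : (0 < m < d)%N -> coprime m N.
Proof.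
apply: (@coprime_of_coprime_run (b 1)) => i lt_id.
by rewrite -[i]/(i.+1.-1) -b_affine ?b_coprime.
Qed.

Lemma coprimez_lt_length (t : int) : t != 0%R -> (`|t| < d)%N -> coprimez t N.
Proof.
by move=> t_neq0 lt_td; rewrite coprimezE coprime_lt_length ?absz_gt0 ?t_neq0.
Qed.

Lemma sqr_bounds_strict i : (1 <= i <= d)%N -> (b i ^ 2 <= N < 2 * b i ^ 2)%N.
Proof.
move=> hi; have [le_N le_sqr] := b_sqr_bounds hi; rewrite le_sqr ltn_neqAle le_N andbT.
apply: contraTneq (b_coprime hi) => ->.
rewrite coprimeMr coprime_pexpr // /coprime gcdnn.
by rewrite negb_and orbC gtn_eqF ?b_gt1.
Qed.

Hypothesis digit1_le : forall i, (1 <= i <= d)%N -> (N %/ b i - b i <= N %% b i + 1)%N.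

Lemma b_le_divn i : (1 <= i <= d)%N -> (b i <= N %/ b i)%N.
Proof.
move=> hi; have b_gt0 := ltnW (b_gt1 hi).
by have /andP[] := divn_sqr_bounds b_gt0 (sqr_bounds_strict hi).
Qed.

Lemma divn_b_addS i : (1 <= i < d)%N -> (N %/ b i.+1 + i.+1 = N %/ b i + i)%N.
Proof.
move=> /andP[i_gt0 lt_id]; have hi : (1 <= i <= d)%N by rewrite i_gt0 ltnW.
have q_gt0 : (0 < N %/ b i)%N := leq_trans (ltnW (b_gt1 hi)) (b_le_divn hi).
rewrite b_succ ?i_gt0 // divnS_of_digit_le.
- by rewrite addnS -addSn prednK.
- exact: ltnW (b_gt1 hi).
- exact: b_le_divn.
- exact: digit1_le.
Qed.

Lemma divn_b_add i : (1 <= i <= d)%N -> (N %/ b i + i = N %/ b d + d)%N.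
Proof.
have shift k j : (0 < j)%N -> (j + k <= d)%N ->
    (N %/ b j + j = N %/ b (j + k) + (j + k))%N.
  elim: k j => [j _ _|k IH j j_gt0 le_d]; first by rewrite addn0.
  rewrite -divn_b_addS; last by rewrite j_gt0 -addn1 (leq_trans _ le_d) ?leq_add2l.
  by rewrite -[j + k.+1]addSnnS IH // addSnnS.
by move=> /andP[i_gt0 le_id]; rewrite -[in RHS](subnKC le_id) -shift ?subnKC.
Qed.

Hypothesis D_coprime :
  forall z, (z + 2 <= 2 * d)%N -> coprime (b 1 + N %/ b d + z) N.

(* An integer congruent to b_j modulo N, for 1 <= j <= 2d. *)
Definition base_rep j : int :=
  (if (j <= d)%N then (b j)%:Z else - (N %/ b (j - d))%:Z)%R.

Lemma base_rep_affine j : (1 <= j <= 2 * d)%N ->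
  base_rep j = (if (j <= d)%N then (b 1 + j.-1)%:Z
               else j%:Z - (N %/ b d + 2 * d)%:Z)%R.
Proof.
move=> /andP[j_gt0 le_j2d]; rewrite /base_rep; case: leqP => [le_jd|lt_dj].
  by rewrite b_affine // j_gt0.
have hjd : (1 <= j - d <= d)%N by lia.
have := divn_b_add hjd; move: (N %/ b (j - d)) (N %/ b d) => q Q shift.
lia.
Qed.

Lemma coprimez_base_rep_sub j k : (1 <= j <= 2 * d)%N -> (1 <= k <= 2 * d)%N ->
  j != k -> coprimez (base_rep j - base_rep k)%R N.
Proof.
wlog lt_jk : j k / (j < k)%N.
  move=> wlogH hj hk; case: (ltngtP j k) => // lt _.
    by rewrite wlogH ?ltn_eqF.
  by rewrite -coprimeNz opprB wlogH ?ltn_eqF.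
move=> hj hk _; rewrite !base_rep_affine //.
case: (leqP k d) => [le_kd|lt_dk].
  rewrite (ltnW (leq_trans lt_jk le_kd)).
  apply: coprimez_lt_length; lia.
case: leqP => [le_jd|lt_dj]; last by apply: coprimez_lt_length; lia.
have := @D_coprime (j.-1 + (2 * d - k)); move: (N %/ b d) => Q D_cop.
rewrite coprimezE (_ : (_ - _ = (b 1 + Q + (j.-1 + (2 * d - k)))%:Z)%R).
  by rewrite absz_nat D_cop //; lia.
lia.
Qed.

End ConsecutiveBases.

Theorem lemma2p13 (N d : nat) (b : nat -> nat) :
  (* b_i >= 2 so that the b_i-adic digit polynomial is defined *)
  (forall i, (1 <= i <= d)%N -> (2 <= b i)%N) ->
  (* ceil(sqrt N / sqrt 2) <= b_i <= floor(sqrt N) *)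
  (forall i, (1 <= i <= d)%N -> (N <= 2 * b i ^ 2)%N /\ (b i ^ 2 <= N)%N) ->
  (forall i, (1 <= i <= d)%N -> coprime (b i) N) ->
  (forall i, (1 <= i < d)%N -> b i.+1 = (b i).+1) ->
  let D := (b 1 + N %/ b d)%N in
  let n (k i : nat) : nat := ((digit_poly (b i) N)`_k)%R in
  (forall z, (z + 2 <= 2 * d)%N -> coprime (D + z) N) ->
  (forall i, (1 <= i <= d)%N -> (n 1%N i <= n 0%N i + 1)%N) ->
  (forall i, (1 <= i <= d)%N -> coprime (n 2%N i * b i) N) /\
  (let b' j := if (j <= d)%N then b j
               else (n 0%N (j - d) * invmodn (n 2%N (j - d)) N
                       * invmodn (b (j - d)) N %% N)%N in
   forall j k, (1 <= j <= 2 * d)%N -> (1 <= k <= 2 * d)%N -> j <> k ->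
     coprimez ((b' j)%:Z - (b' k)%:Z)%R (N%:Z)).
Proof.
move=> b_gt1 b_bounds b_cop b_succ D n D_cop digits_le.
have sqr_bounds := sqr_bounds_strict b_gt1 b_bounds b_cop.
have n0 i : n 0%N i = (N %% b i)%N by rewrite /n coef_poly expn0 divn1.
have n2 i : (1 <= i <= d)%N -> n 2%N i = 1%N.
  by move=> hi; apply: coef2_digit_poly_sqr; [apply: b_gt1 | apply: sqr_bounds].
have digit1_le i : (1 <= i <= d)%N -> (N %/ b i - b i <= N %% b i + 1)%N.
  move=> hi; rewrite -n0 -(coef1_digit_poly_sqr (b_gt1 _ hi) (sqr_bounds _ hi)).
  exact: digits_le.
split=> [i hi|b' j k hj hk /eqP neq_jk]; first by rewrite n2 // mul1n b_cop.
have b'_eq_mod i : (1 <= i <= 2 * d)%N -> ((b' i)%:Z = base_rep N d b i %[mod N])%Z.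
  rewrite /b' /base_rep; case: (leqP i d) => // lt_di hi.
  have hid : (1 <= i - d <= d)%N.
    by rewrite subn_gt0 lt_di leq_subLR addnn -mul2n; case/andP: hi.
  apply/eqP; rewrite eqz_mod_dvd opprK -PoszD dvdzE !absz_nat n0 n2 //.
  rewrite /dvdn -modnMml modn_mul_invmodn1 modnMml modnDml.
  exact: dvdn_modn_mul_invmodn_add_divn (ltnW (b_gt1 _ hid)) (b_cop _ hid).
rewrite (coprimez_eq_mod (y := base_rep N d b j - base_rep N d b k)).
  exact: (coprimez_base_rep_sub b_gt1 b_bounds b_cop b_succ digit1_le D_cop).
by rewrite -modzDml b'_eq_mod // modzDml -modzDmr -modzNm b'_eq_mod // modzNm modzDmr.
Qed.
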